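(* Consider a parameter-dependent flow on the strip $[x_-,x_+]\times\mathbb R$ satisfying all the standing assumptions in the context, including the monotonicity assumption (M). Fix a solution $x(\tau)$ of $\dot x=f(x)$ with values in $(x_-,x_+)$, and for $\mu\in I$ write the distinguished orbits as $\widetilde{\mathcal W}^\pm_\mu=\{(x(\tau),y^\pm_\mu(\tau)):\tau\in\mathbb R\}$. Then $y^\pm_\mu$ are monotone in $\mu$: if $\mu_1<\mu_2$ then $y^-_{\mu_1}(\tau)\ge y^-_{\mu_2}(\tau)$ and $y^+_{\mu_1}(\tau)\le y^+_{\mu_2}(\tau)$ for all $\tau\in\mathbb R$.
   Context: Let $x_-<x_+$ and consider on the strip $[x_-,x_+]\times\mathbb R$ (universal cover of the cylinder $[x_-,x_+]\times\mathbb S^1$, $\mathbb S^1=\mathbb R/2\pi\mathbb Z$) the family of systems $\dot x=f(x)$, $\dot y=g_\mu(x,y)$, with parameter $\mu$ in an open interval $I\subset\mathbb R$; $f$ is smooth, $g_\mu(x,y)$ is smooth in $(x,y)$, $C^1$ in $\mu$, and $2\pi$-periodic in $y$. Assume $f(x_\pm)=0$, $f>0$ on $(x_-,x_+)$, $f'(x_-)\ge0$, $f'(x_+)\le0$. For each $\mu$ assume: $g_\mu(x_-,y)=0$ iff $y\equiv s_-$ or $y\equiv n_-$ mod $2\pi$, and $g_\mu(x_+,y)=0$ iff $y\equiv s_+$ or $y\equiv n_+$ mod $2\pi$, where $-\pi\le s_-<n_-\le\pi$, $-\pi\le s_+<n_+\le\pi$ (depending on $\mu$); $\partial_yg_\mu(x_-,n_-)>0$,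 $\partial_yg_\mu(x_-,s_-)<0$, $\partial_yg_\mu(x_+,n_+)<0$, $\partial_yg_\mu(x_+,s_+)>0$; $s_--n_-\equiv n_+-s_+$ mod $2\pi$; and the flow has no non-wandering points other than these boundary equilibria and their $2\pi$-translates. Monotonicity assumption (M): $\partial_\mu g_\mu(x,y)\le0$ for all $(x,y)$ and $\mu$. Let $\tilde S_-=(x_-,s_-)$ and $\tilde S_+=(x_+,s_+)$. The distinguished orbit $\widetilde{\mathcal W}^-_\mu$ is the unique orbit in the open strip whose $\alpha$-limit is $\tilde S_-$, and $\widetilde{\mathcal W}^+_\mu$ the unique orbit whose $\omega$-limit is $\tilde S_+$. *)

From Stdlib Require Import Reals Lra ZArith.
From Coquelicot Require Import Coquelicot.
Open Scope R_scope.

Definition smooth1 (f : R -> R) : Prop := forall (n : nat) (x : R), ex_derive_n f n x.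

Fixpoint C2k (k : nat) (g : R -> R -> R) : Prop :=
  match k with
  | O => forall x y, continuity_2d_pt g x y
  | S k' => (forall x y, continuity_2d_pt g x y) /\
            exists gx gy : R -> R -> R,
              (forall x y, is_derive (fun t => g t y) x (gx x y)) /\
              (forall x y, is_derive (fun t => g x t) y (gy x y)) /\
              C2k k' gx /\ C2k k' gy
  end.

Definition smooth2 (g : R -> R -> R) : Prop := forall k, C2k k g.

Definition cong2pi (y a : R) : Prop := exists k : Z, y = a + 2 * IZR k * PI.

Definition is_sol (xm xp : R) (f : R -> R) (g : R -> R -> R) (X Y : R -> R) : Prop :=
  forall t, xm <= X t <= xp /\
            is_derive X t (f (X t)) /\ is_derive Y t (g (X t) (Y t)).

Definition nonwandering (xm xp : R) (f : R -> R) (g : R -> R -> R) (px py : R) : Prop :=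
  forall eps T : R, 0 < eps ->
    exists (X Y : R -> R) (t : R),
      is_sol xm xp f g X Y /\ T <= t /\
      Rabs (X 0 - px) < eps /\ Rabs (Y 0 - py) < eps /\
      Rabs (X t - px) < eps /\ Rabs (Y t - py) < eps.

Definition in_alpha_limit (X Y : R -> R) (px py : R) : Prop :=
  forall eps T : R, 0 < eps -> exists t, t <= T /\
    Rabs (X t - px) < eps /\ Rabs (Y t - py) < eps.

Definition in_omega_limit (X Y : R -> R) (px py : R) : Prop :=
  forall eps T : R, 0 < eps -> exists t, T <= t /\
    Rabs (X t - px) < eps /\ Rabs (Y t - py) < eps.

Definition inI (a b : Rbar) (mu : R) : Prop := Rbar_lt a (Finite mu) /\ Rbar_lt (Finite mu) b.

From Stdlib Require Import Reals ZArith Lra Lia Classical.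
From Coquelicot Require Import Coquelicot.
Open Scope R_scope.

(* By (M), G mu2 <= G mu1 on the strip. A Gronwall argument (G is locally Lipschitz in y)
   gives the comparison principle: if a mu2-solution lies above a mu1-solution at some time,
   it lies above it at all earlier times. Suppose y^-_{mu2} > y^-_{mu1} at some time. Going
   back to tau -> -oo, the saddles then satisfy s_-(mu1) <= s_-(mu2); strict inequality is
   impossible, since G mu1 (x_-, .) < 0 on (s_-(mu1), n_-(mu1)) and G mu2 (x_-, .) > 0 on
   (n_-(mu2) - 2 pi, s_-(mu2)), and these intervals would overlap. At the common saddle
   G mu1 is decreasing in y, so the positive gap y^-_{mu2} - y^-_{mu1} is nonincreasing as
   tau -> -oo, although it tends to 0. The stable branches y^+ are the unstable branches of
   the flow reflected by (x, y, tau) |-> (-x, -y, -tau). *)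

Lemma is_derive_continuity_pt f x d : is_derive f x d -> continuity_pt f x.
Proof.
  intros Hd. apply continuity_pt_filterlim, (ex_derive_continuous f x).
  now exists d.
Qed.

Lemma continuity_pt_ball f x : continuity_pt f x -> forall e, 0 < e ->
  exists d, 0 < d /\ forall y, Rabs (y - x) < d -> Rabs (f y - f x) < e.
Proof.
  intros Hc e He.
  destruct (proj1 (continuity_pt_locally f x) Hc (mkposreal e He)) as [d Hd].
  exists d; split; [apply cond_pos | exact Hd].
Qed.

Lemma nondecr_of_is_derive_nonneg f df a b : a <= b ->
  (forall t, a <= t <= b -> is_derive f t (df t)) ->
  (forall t, a <= t <= b -> 0 <= df t) -> f a <= f b.
Proof.
  intros Hab Hd Hpos.
  destruct (MVT_gen f a b df) as [c [Hc Heq]].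
  - intros x Hx. rewrite Rmin_left, Rmax_right in Hx by lra. apply Hd; lra.
  - intros x Hx. rewrite Rmin_left, Rmax_right in Hx by lra.
    apply (is_derive_continuity_pt _ _ (df x)), Hd; lra.
  - rewrite Rmin_left, Rmax_right in Hc by lra.
    assert (0 <= df c * (b - a)) by (apply Rmult_le_pos; [apply Hpos|]; lra).
    lra.
Qed.

Lemma nonincr_of_is_derive_nonpos f df a b : a <= b ->
  (forall t, a <= t <= b -> is_derive f t (df t)) ->
  (forall t, a <= t <= b -> df t <= 0) -> f b <= f a.
Proof.
  intros Hab Hd Hneg.
  enough (- f a <= - f b) by lra.
  apply (nondecr_of_is_derive_nonneg (fun t => - f t) (fun t => - df t)); [exact Hab| |].
  - intros t Ht. exact (is_derive_opp f t (df t) (Hd t Ht)).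
  - intros t Ht. specialize (Hneg t Ht). lra.
Qed.

Lemma is_derive_comp_opp (g : R -> R) z l :
  is_derive g (- z) l -> is_derive (fun z => g (- z)) z (- l).
Proof.
  intros Hg.
  assert (Hc := is_derive_comp g Ropp z l (-1) Hg ltac:(auto_derive; auto)).
  replace (- l) with (scal (-1) l) by (unfold scal; simpl; unfold mult; simpl; ring).
  exact Hc.
Qed.

Lemma is_derive_reflect (g : R -> R) z l :
  is_derive g (- z) l -> is_derive (fun z => - g (- z)) z l.
Proof.
  intros Hg. rewrite <- (Ropp_involutive l).
  exact (is_derive_opp _ z _ (is_derive_comp_opp g z l Hg)).
Qed.

Lemma neg_just_right_of_zero (h : R -> R) a d :
  is_derive h a d -> d < 0 -> h a = 0 ->
  exists del, 0 < del /\ forall y, a < y < a + del -> h y < 0.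
Proof.
  intros Hd Hneg H0.
  destruct (proj1 (is_derive_Reals _ _ _) Hd (- d / 2) ltac:(lra)) as [del Hdel].
  exists del; split; [apply cond_pos|]. intros y Hy.
  assert (Habs : Rabs (y - a) < del) by (rewrite Rabs_right; lra).
  specialize (Hdel (y - a) ltac:(lra) Habs).
  replace (a + (y - a)) with y in Hdel by ring. rewrite H0, Rminus_0_r in Hdel.
  apply Rabs_def2 in Hdel.
  assert (Hq : h y / (y - a) < 0) by lra.
  replace (h y) with (h y / (y - a) * (y - a)) by (field; lra).
  apply Rmult_neg_pos; lra.
Qed.

Lemma neg_on_zero_free_right (h dh : R -> R) a b :
  (forall y, is_derive h y (dh y)) -> h a = 0 -> dh a < 0 ->
  (forall y, a < y < b -> h y <> 0) -> forall y, a < y < b -> h y < 0.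
Proof.
  intros Hd H0 Hneg Hnz y Hy.
  destruct (Rlt_or_le (h y) 0) as [|Hge]; [assumption|exfalso].
  destruct (neg_just_right_of_zero h a (dh a) (Hd a) Hneg H0) as [del [Hdel Hright]].
  set (p := a + Rmin (del / 2) ((y - a) / 2)).
  assert (Hp : a < p < y /\ p < a + del).
  { assert (Rmin (del / 2) ((y - a) / 2) <= del / 2) by apply Rmin_l.
    assert (Rmin (del / 2) ((y - a) / 2) <= (y - a) / 2) by apply Rmin_r.
    assert (0 < Rmin (del / 2) ((y - a) / 2)) by (apply Rmin_glb_lt; lra).
    unfold p; lra. }
  assert (Hhp : h p < 0) by (apply Hright; lra).
  assert (Hc : continuity h) by (intro z; exact (is_derive_continuity_pt _ _ _ (Hd z))).
  destruct (IVT_gen h p y 0 Hc) as [z [Hz Hhz]].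
  - rewrite Rmin_left, Rmax_right by lra. lra.
  - rewrite Rmin_left, Rmax_right in Hz by lra. apply (Hnz z); [lra | exact Hhz].
Qed.

Lemma pos_on_zero_free_left (h dh : R -> R) c a :
  (forall y, is_derive h y (dh y)) -> h a = 0 -> dh a < 0 ->
  (forall y, c < y < a -> h y <> 0) -> forall y, c < y < a -> 0 < h y.
Proof.
  intros Hd H0 Hneg Hnz y Hy.
  enough (Hrefl : - h (- - y) < 0) by (rewrite Ropp_involutive in Hrefl; lra).
  apply (neg_on_zero_free_right (fun z => - h (- z)) (fun z => dh (- z)) (- a) (- c)).
  - intro z. apply is_derive_reflect, Hd.
  - rewrite Ropp_involutive, H0. lra.
  - rewrite Ropp_involutive. exact Hneg.
  - intros z Hz Hhz. apply (Hnz (- z)); lra.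
  - lra.
Qed.

Lemma cong2pi_eq y a : cong2pi y a -> Rabs (y - a) < 2 * PI -> y = a.
Proof.
  intros [k ->] Hsmall. assert (HPI := PI_RGT_0).
  destruct (Z.eq_dec k 0) as [->|Hk]; [simpl; ring|exfalso].
  replace (a + 2 * IZR k * PI - a) with (IZR k * (2 * PI)) in Hsmall by ring.
  rewrite Rabs_mult, (Rabs_right (2 * PI)) in Hsmall by lra.
  assert (1 <= Rabs (IZR k)).
  { rewrite <- abs_IZR. apply IZR_le. lia. }
  nra.
Qed.

Lemma not_cong2pi_between s n y : s < n <= s + 2 * PI ->
  s < y < n \/ n - 2 * PI < y < s -> ~ (cong2pi y s \/ cong2pi y n).
Proof.
  intros Hsn Hy [Hc|Hc]; apply cong2pi_eq in Hc; try (apply Rabs_def1; lra); lra.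
Qed.

Lemma cong2pi_opp y a : cong2pi (- y) a <-> cong2pi y (- a).
Proof.
  split; intros [k Hk]; exists (- k)%Z; rewrite opp_IZR; lra.
Qed.

Lemma cong2pi_add_2PI y a : cong2pi y (a + 2 * PI) <-> cong2pi y a.
Proof.
  split; intros [k Hk].
  - exists (k + 1)%Z. rewrite plus_IZR. lra.
  - exists (k - 1)%Z. rewrite minus_IZR. lra.
Qed.

Lemma cong2pi_refl y : cong2pi y y.
Proof. exists 0%Z. simpl. ring. Qed.

Definition has_cont_dy (G gy : R -> R -> R) : Prop :=
  (forall x y, is_derive (G x) y (gy x y)) /\ (forall x y, continuity_2d_pt gy x y).

Lemma has_cont_dy_of_smooth2 G : smooth2 G -> exists gy, has_cont_dy G gy.
Proof.
  intros Hs. destruct (Hs 1%nat) as [_ [gx [gy [_ [Hgy [_ Hc]]]]]].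
  exists gy. split; [exact Hgy | exact Hc].
Qed.

Lemma has_cont_dy_reflect G gy : has_cont_dy G gy ->
  has_cont_dy (fun x y => G (- x) (- y)) (fun x y => - gy (- x) (- y)).
Proof.
  intros [Hd Hc]. split.
  - intros x y. apply (is_derive_comp_opp (G (- x))), Hd.
  - intros x y eps. destruct (Hc (- x) (- y) eps) as [del Hdel].
    exists del. intros u v Hu Hv.
    replace (- gy (- u) (- v) - - gy (- x) (- y))
      with (- (gy (- u) (- v) - gy (- x) (- y))) by ring.
    rewrite Rabs_Ropp. apply Hdel.
    + replace (- u - - x) with (- (u - x)) by ring. now rewrite Rabs_Ropp.
    + replace (- v - - y) with (- (v - y)) by ring. now rewrite Rabs_Ropp.
Qed.

Definition locally_lipschitz_y (G : R -> R -> R) : Prop :=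
  forall x0 y0, exists d L, 0 < d /\ forall x ya yb, Rabs (x - x0) < d ->
    Rabs (ya - y0) < d -> Rabs (yb - y0) < d ->
    Rabs (G x yb - G x ya) <= L * Rabs (yb - ya).

Definition decreasing_y_near (G : R -> R -> R) (x0 y0 : R) : Prop :=
  exists d, 0 < d /\ forall x ya yb, Rabs (x - x0) < d ->
    Rabs (ya - y0) < d -> Rabs (yb - y0) < d -> ya <= yb -> G x yb <= G x ya.

Lemma mvt_in_ball (g dg : R -> R) ya yb y0 d :
  (forall y, is_derive g y (dg y)) -> Rabs (ya - y0) < d -> Rabs (yb - y0) < d ->
  exists c, Rabs (c - y0) < d /\ g yb - g ya = dg c * (yb - ya).
Proof.
  intros Hd Ha Hb.
  destruct (MVT_gen g ya yb dg) as [c [Hc Heq]].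
  - intros y _. apply Hd.
  - intros y _. exact (is_derive_continuity_pt _ _ _ (Hd y)).
  - exists c. split; [|exact Heq].
    apply Rabs_def2 in Ha. apply Rabs_def2 in Hb. apply Rabs_def1.
    + destruct (Rle_dec ya yb);
        [rewrite Rmax_right in Hc | rewrite Rmax_left in Hc]; lra.
    + destruct (Rle_dec ya yb);
        [rewrite Rmin_left in Hc | rewrite Rmin_right in Hc]; lra.
Qed.

Lemma locally_lipschitz_y_of_cont_dy G gy : has_cont_dy G gy -> locally_lipschitz_y G.
Proof.
  intros [Hd Hc] x0 y0. destruct (Hc x0 y0 (mkposreal 1 Rlt_0_1)) as [del Hdel].
  exists del, (Rabs (gy x0 y0) + 1). split; [apply cond_pos|].
  intros x ya yb Hx Ha Hb.
  destruct (mvt_in_ball (G x) (gy x) ya yb y0 del (Hd x) Ha Hb) as [c [Hcy ->]].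
  rewrite Rabs_mult. apply Rmult_le_compat_r; [apply Rabs_pos|].
  specialize (Hdel x c Hx Hcy). simpl in Hdel.
  assert (Htri := Rabs_triang_inv (gy x c) (gy x0 y0)). lra.
Qed.

Lemma decreasing_y_near_of_cont_dy G gy x0 y0 :
  has_cont_dy G gy -> gy x0 y0 < 0 -> decreasing_y_near G x0 y0.
Proof.
  intros [Hd Hc] Hneg.
  destruct (Hc x0 y0 (mkposreal (- gy x0 y0) ltac:(lra))) as [del Hdel].
  exists del. split; [apply cond_pos|].
  intros x ya yb Hx Ha Hb Hab.
  destruct (mvt_in_ball (G x) (gy x) ya yb y0 del (Hd x) Ha Hb) as [c [Hcy Heq]].
  specialize (Hdel x c Hx Hcy). simpl in Hdel. apply Rabs_def2 in Hdel.
  assert (gy x c * (yb - ya) <= 0) by (apply Rmult_le_0_r; lra). lra.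
Qed.

Lemma Derive_of_cont_dy G gy x y : has_cont_dy G gy -> Derive (G x) y = gy x y.
Proof. intros [Hd _]. exact (is_derive_unique _ _ _ (Hd x y)). Qed.

Definition tends_minfty (u : R -> R) (l : R) : Prop :=
  forall e, 0 < e -> Rbar_locally m_infty (fun t => Rabs (u t - l) < e).

Lemma le_of_tends_minfty (u v : R -> R) a b tau :
  (forall t, t <= tau -> u t <= v t) -> tends_minfty u a -> tends_minfty v b -> a <= b.
Proof.
  intros Huv Hu Hv. apply Rnot_lt_le. intros Hlt.
  assert (Hbelow : Rbar_locally m_infty (fun t => t <= tau)) by (exists tau; intros; lra).
  destruct (filter_ex (F := Rbar_locally m_infty) _ (filter_and _ _ Hbelow
    (filter_and (F := Rbar_locally m_infty) _ _
      (Hu ((a - b) / 2) ltac:(lra)) (Hv ((a - b) / 2) ltac:(lra))))) as [t [Ht [Hut Hvt]]].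
  apply Rabs_def2 in Hut. apply Rabs_def2 in Hvt. specialize (Huv t Ht). lra.
Qed.

Lemma frequently_or (P Q : R -> Prop) :
  (forall T, exists t, t <= T /\ (P t \/ Q t)) ->
  (forall T, exists t, t <= T /\ P t) \/ (forall T, exists t, t <= T /\ Q t).
Proof.
  intros HPQ.
  destruct (classic (forall T, exists t, t <= T /\ P t)) as [|HnP]; [now left | right].
  apply not_all_ex_not in HnP as [T0 HT0].
  intros T. destruct (HPQ (Rmin T T0)) as [t [Ht [HP|HQ]]].
  - exfalso. apply HT0. exists t. split; [|exact HP].
    eapply Rle_trans; [exact Ht | apply Rmin_r].
  - exists t. split; [|exact HQ]. eapply Rle_trans; [exact Ht | apply Rmin_l].
Qed.

Lemma crosses_level (y : R -> R) s e t1 t2 : continuity y -> t1 <= t2 ->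
  Rabs (y t1 - s) < e -> e <= Rabs (y t2 - s) ->
  exists t, t1 <= t <= t2 /\ (y t = s + e \/ y t = s - e).
Proof.
  intros Hc Ht Hin Hout. apply Rabs_def2 in Hin.
  destruct (Rle_or_lt 0 (y t2 - s)) as [Hup|Hdown].
  - rewrite Rabs_right in Hout by lra.
    destruct (IVT_gen y t1 t2 (s + e) Hc) as [t [Hti Hyt]].
    + rewrite Rmin_left, Rmax_right by lra. lra.
    + rewrite Rmin_left, Rmax_right in Hti by lra. eauto.
  - rewrite Rabs_left in Hout by lra.
    destruct (IVT_gen y t1 t2 (s - e) Hc) as [t [Hti Hyt]].
    + rewrite Rmin_right, Rmax_left by lra. lra.
    + rewrite Rmin_left, Rmax_right in Hti by lra. eauto.
Qed.

Lemma in_alpha_limit_of_frequent (X y : R -> R) x0 v : tends_minfty X x0 ->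
  (forall T, exists t, t <= T /\ y t = v) -> in_alpha_limit X y x0 v.
Proof.
  intros HX Hv eps T Heps. destruct (HX eps Heps) as [TX HTX].
  destruct (Hv (Rmin T (TX - 1))) as [t [Ht Hyt]].
  assert (Rmin T (TX - 1) <= T) by apply Rmin_l.
  assert (Rmin T (TX - 1) <= TX - 1) by apply Rmin_r.
  exists t. repeat split; [lra | apply HTX; lra |].
  rewrite Hyt, Rminus_diag, Rabs_R0. exact Heps.
Qed.

(* Otherwise [y] takes one of the values [s + e], [s - e] at arbitrarily negative times,
   which puts a second point into the alpha-limit set. *)
Lemma tends_minfty_of_alpha_limit (X y : R -> R) x0 s :
  continuity y -> (forall t1 t2, t1 <= t2 -> X t1 <= X t2) -> (forall t, x0 <= X t) ->
  (forall px py, in_alpha_limit X y px py <-> px = x0 /\ py = s) ->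
  tends_minfty X x0 /\ tends_minfty y s.
Proof.
  intros Hyc Hmon Hlow Hchar.
  assert (Hin : in_alpha_limit X y x0 s) by now apply Hchar.
  assert (HX : tends_minfty X x0).
  { intros e He. destruct (Hin e 0 He) as [t0 [_ [Ht0 _]]].
    exists t0. intros t Ht. apply Rabs_def2 in Ht0.
    specialize (Hmon t t0 ltac:(lra)). specialize (Hlow t). apply Rabs_def1; lra. }
  split; [exact HX|]. intros e He.
  destruct (classic (Rbar_locally m_infty (fun t => Rabs (y t - s) < e))) as [|Hfar];
    [assumption | exfalso].
  assert (Hcross : forall T, exists t, t <= T /\ (y t = s + e \/ y t = s - e)).
  { intros T. destruct (not_all_ex_not _ _ (fun H => Hfar (ex_intro _ T H))) as [t2 Ht2].
    apply imply_to_and in Ht2 as [Ht2T Hout].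
    destruct (Hin e t2 He) as [t1 [Ht12 [_ Hin1]]].
    destruct (crosses_level y s e t1 t2 Hyc Ht12 Hin1 ltac:(lra)) as [t [Ht Hyt]].
    exists t. split; [lra | exact Hyt]. }
  destruct (frequently_or _ _ Hcross) as [Hv|Hv];
    apply (in_alpha_limit_of_frequent X y x0 _ HX), Hchar in Hv; lra.
Qed.

Lemma in_alpha_limit_reflect (X y : R -> R) x0 s :
  (forall px py, in_omega_limit X y px py <-> px = x0 /\ py = s) ->
  forall px py, in_alpha_limit (fun t => - X (- t)) (fun t => - y (- t)) px py <->
    px = - x0 /\ py = - s.
Proof.
  assert (Hopp : forall u v, Rabs (- u - v) = Rabs (u - - v)).
  { intros u v. rewrite <- Rabs_Ropp. f_equal. ring. }
  intros Hchar px py. split.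
  - intros Hal. enough (- px = x0 /\ - py = s) by lra. apply Hchar.
    intros eps T Heps. destruct (Hal eps (- T) Heps) as [t [Ht [H1 H2]]].
    exists (- t). split; [lra|]. rewrite Hopp in H1, H2. auto.
  - intros [-> ->] eps T Heps.
    destruct (proj2 (Hchar x0 s) (conj eq_refl eq_refl) eps (- T) Heps) as [t [Ht [H1 H2]]].
    exists (- t). split; [lra|]. rewrite !Ropp_involutive, !Hopp, !Ropp_involutive. auto.
Qed.

Lemma nonpos_persists (D : R -> R) : continuity D ->
  (forall m, D m = 0 -> exists del, 0 < del /\ forall t, m <= t < m + del ->
     (forall u, m <= u <= t -> 0 <= D u) -> D t <= 0) ->
  forall t1 t2, t1 <= t2 -> D t1 <= 0 -> D t2 <= 0.
Proof.
  intros HDc Hloc t1 t2 Ht12 HD1.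
  destruct (Rle_or_lt (D t2) 0) as [|HD2]; [assumption | exfalso].
  (* [m] is the last time in [t1, t2] where [D <= 0] *)
  destruct (completeness (fun t => t1 <= t <= t2 /\ D t <= 0)) as [m [Hub Hlub]].
  { exists t2. intros t [Ht _]. lra. }
  { exists t1. split; [lra | exact HD1]. }
  assert (Hm1 : t1 <= m) by (apply Hub; split; [lra | exact HD1]).
  assert (Hm2 : m <= t2) by (apply Hlub; intros t [Ht _]; lra).
  assert (Hafter : forall t, m < t <= t2 -> 0 < D t).
  { intros t Ht. apply Rnot_le_lt. intros Hle.
    assert (t <= m) by (apply Hub; split; [lra | exact Hle]). lra. }
  assert (HDm_nonpos : D m <= 0).
  { apply Rnot_lt_le. intros Hpos.
    destruct (continuity_pt_ball D m (HDc m) (D m) Hpos) as [del [Hdel Hnear]].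
    assert (m <= m - del / 2); [|lra].
    apply Hlub. intros t [Ht HDt]. apply Rnot_lt_le. intros Hlt.
    assert (t <= m) by (apply Hub; split; [exact Ht | exact HDt]).
    specialize (Hnear t ltac:(apply Rabs_def1; lra)). apply Rabs_def2 in Hnear. lra. }
  assert (Hmt2 : m < t2) by (destruct (Req_dec m t2); [subst; lra | lra]).
  assert (HDm : D m = 0).
  { apply Rle_antisym; [exact HDm_nonpos|]. apply Rnot_lt_le. intros Hneg.
    destruct (continuity_pt_ball D m (HDc m) (- D m) ltac:(lra)) as [del [Hdel Hnear]].
    set (t := Rmin (m + del / 2) t2).
    assert (m < t <= t2 /\ t <= m + del / 2) as Ht
      by (unfold t; repeat split; [apply Rmin_glb_lt; lra | apply Rmin_r | apply Rmin_l]).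
    specialize (Hnear t ltac:(apply Rabs_def1; lra)). apply Rabs_def2 in Hnear.
    specialize (Hafter t ltac:(lra)). lra. }
  destruct (Hloc m HDm) as [del [Hdel Hstay]].
  set (t := Rmin (m + del / 2) t2).
  assert (m < t <= t2 /\ t <= m + del / 2) as Ht
    by (unfold t; repeat split; [apply Rmin_glb_lt; lra | apply Rmin_r | apply Rmin_l]).
  assert (D t <= 0).
  { apply Hstay; [lra|]. intros u Hu.
    destruct (Req_dec u m) as [->|Hum]; [lra|]. left. apply Hafter. lra. }
  specialize (Hafter t ltac:(lra)). lra.
Qed.

Lemma saddle_values_eq (h1 h2 : R -> R) s1 n1 s2 c2 :
  (forall y, h2 y <= h1 y) -> s1 <= s2 ->
  s1 < n1 -> (forall y, s1 < y < n1 -> h1 y < 0) ->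
  c2 < n1 -> (forall y, c2 < y < s2 -> 0 < h2 y) -> h2 s2 = 0 -> s2 = s1.
Proof.
  intros Hle Hs12 Hsn1 Hneg1 Hcn Hpos2 Hzero2.
  destruct (Req_dec s2 s1) as [|Hne]; [assumption | exfalso].
  destruct (Rlt_or_le s2 n1) as [Hs2n1|Hn1s2].
  - specialize (Hneg1 s2 ltac:(lra)). specialize (Hle s2). lra.
  - set (y := (Rmax s1 c2 + n1) / 2).
    assert (Rmax s1 c2 < n1) by (apply Rmax_lub_lt; lra).
    assert (s1 <= Rmax s1 c2) by apply Rmax_l.
    assert (c2 <= Rmax s1 c2) by apply Rmax_r.
    specialize (Hneg1 y ltac:(unfold y; lra)). specialize (Hpos2 y ltac:(unfold y; lra)).
    specialize (Hle y). lra.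
Qed.

Section Comparison.

Variables (G1 G2 : R -> R -> R) (X y1 y2 : R -> R) (xa xb : R).
Hypothesis X_cont : continuity X.
Hypothesis X_strip : forall t, xa <= X t <= xb.
Hypothesis G_le : forall x y, xa <= x <= xb -> G2 x y <= G1 x y.
Hypothesis G1_lip : locally_lipschitz_y G1.
Hypothesis y1_sol : forall t, is_derive y1 t (G1 (X t) (y1 t)).
Hypothesis y2_sol : forall t, is_derive y2 t (G2 (X t) (y2 t)).

Let gap t := y2 t - y1 t.

Let is_derive_gap t : is_derive gap t (G2 (X t) (y2 t) - G1 (X t) (y1 t)).
Proof. exact (is_derive_minus y2 y1 t _ _ (y2_sol t) (y1_sol t)). Qed.

Lemma gap_stays_nonpos m : gap m = 0 -> exists del, 0 < del /\
  forall t, m <= t < m + del -> (forall u, m <= u <= t -> 0 <= gap u) -> gap t <= 0.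
Proof.
  intros Hm. assert (Hy21 : y2 m = y1 m) by (unfold gap in Hm; lra).
  destruct (G1_lip (X m) (y1 m)) as [d [L [Hd HL]]].
  destruct (continuity_pt_ball X m (X_cont m) d Hd) as [dx [Hdx HX]].
  destruct (continuity_pt_ball y1 m (is_derive_continuity_pt _ _ _ (y1_sol m)) d Hd)
    as [d1 [Hd1 H1]].
  destruct (continuity_pt_ball y2 m (is_derive_continuity_pt _ _ _ (y2_sol m)) d Hd)
    as [d2 [Hd2 H2]].
  set (del := Rmin dx (Rmin d1 d2)).
  assert (del <= dx /\ del <= d1 /\ del <= d2) as (Hdx' & Hd1' & Hd2').
  { unfold del. repeat split; [apply Rmin_l | |];
      (eapply Rle_trans; [apply Rmin_r | first [apply Rmin_l | apply Rmin_r]]). }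
  exists del. split; [apply Rmin_glb_lt; [|apply Rmin_glb_lt]; lra|].
  intros t Ht Hnonneg. set (K := Rabs L).
  (* Gronwall: the slope of the gap is at most [K * gap], so [gap * exp (-K t)] decreases *)
  assert (Hslope : forall u, m <= u <= t ->
    G2 (X u) (y2 u) - G1 (X u) (y1 u) <= K * gap u).
  { intros u Hu. assert (Hum : Rabs (u - m) < del) by (apply Rabs_def1; lra).
    specialize (HL (X u) (y1 u) (y2 u) (HX u ltac:(lra)) (H1 u ltac:(lra))
      ltac:(rewrite <- Hy21; apply H2; lra)).
    rewrite (Rabs_right (y2 u - y1 u)) in HL by (apply Rle_ge, Hnonneg, Hu).
    assert (L * gap u <= K * gap u)
      by (apply Rmult_le_compat_r; [apply Hnonneg, Hu | apply Rle_abs]).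
    assert (Hr := Rle_abs (G1 (X u) (y2 u) - G1 (X u) (y1 u))).
    specialize (G_le (X u) (y2 u) (X_strip u)). unfold gap in *. lra. }
  assert (Hdecay : gap t * exp (- K * t) <= gap m * exp (- K * m)).
  { apply (nonincr_of_is_derive_nonpos (fun u => gap u * exp (- K * u))
      (fun u => (G2 (X u) (y2 u) - G1 (X u) (y1 u)) * exp (- K * u)
                + gap u * (- K * exp (- K * u)))); [lra | |].
    - intros u _. apply (is_derive_mult gap (fun u => exp (- K * u))).
      + apply is_derive_gap.
      + auto_derive; [exact I | ring].
      + intros; apply Rmult_comm.
    - intros u Hu. specialize (Hslope u Hu). assert (Hexp := exp_pos (- K * u)).
      assert (((G2 (X u) (y2 u) - G1 (X u) (y1 u)) - K * gap u) * exp (- K * u) <= 0)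
        by (apply Rmult_le_0_r; lra).
      lra. }
  rewrite Hm, Rmult_0_l in Hdecay. assert (Hexp := exp_pos (- K * t)).
  apply Rnot_lt_le. intros Hpos.
  assert (0 < gap t * exp (- K * t)) by (apply Rmult_lt_0_compat; lra). lra.
Qed.

Lemma comparison_principle t1 t2 : t1 <= t2 -> y2 t1 <= y1 t1 -> y2 t2 <= y1 t2.
Proof.
  intros Ht Hy. enough (gap t2 <= 0) by (unfold gap in *; lra).
  apply (nonpos_persists gap) with t1;
    [| exact gap_stays_nonpos | exact Ht | unfold gap; lra].
  intro t. exact (is_derive_continuity_pt _ _ _ (is_derive_gap t)).
Qed.

Variable x0 : R.
Hypothesis lim_X : tends_minfty X x0.

(* Near a common limit point where [G1] decreases in [y], a positive gap could only grow
   backwards in time, whereas it must tend to zero. *)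
Lemma gap_not_pos_near_common_limit s tau :
  decreasing_y_near G1 x0 s -> tends_minfty y1 s -> tends_minfty y2 s ->
  ~ (forall t, t <= tau -> y1 t < y2 t).
Proof.
  intros [d [Hd Hdec]] Hl1 Hl2 Hpos.
  assert (Hbelow : forall T, Rbar_locally m_infty (fun t => t <= T))
    by (intro T; exists T; intros; lra).
  destruct (filter_and (F := Rbar_locally m_infty) _ _ (Hbelow tau)
    (filter_and _ _ (lim_X d Hd) (filter_and _ _ (Hl1 d Hd) (Hl2 d Hd)))) as [M HM].
  set (T := M - 1).
  assert (HgT : forall t, t <= T -> gap T <= gap t).
  { intros t Ht.
    apply (nonincr_of_is_derive_nonpos gap (fun u => G2 (X u) (y2 u) - G1 (X u) (y1 u)) t T Ht);
      [intros; apply is_derive_gap|].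
    intros u Hu. destruct (HM u ltac:(unfold T in *; lra)) as (Hu_tau & HXu & H1u & H2u).
    specialize (Hpos u Hu_tau).
    specialize (Hdec (X u) (y1 u) (y2 u) HXu H1u H2u ltac:(lra)).
    specialize (G_le (X u) (y2 u) (X_strip u)). lra. }
  assert (HgT_pos : 0 < gap T).
  { specialize (Hpos T (proj1 (HM T ltac:(unfold T; lra)))). unfold gap. lra. }
  destruct (filter_ex (F := Rbar_locally m_infty) _ (filter_and _ _ (Hbelow T)
    (filter_and (F := Rbar_locally m_infty) _ _
      (Hl1 (gap T / 4) ltac:(lra)) (Hl2 (gap T / 4) ltac:(lra))))) as [t (Ht & H1t & H2t)].
  specialize (HgT t Ht). apply Rabs_def2 in H1t. apply Rabs_def2 in H2t.
  unfold gap in *. lra.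
Qed.

Lemma solutions_ordered_of_limits s1 n1 s2 c2 :
  xa <= x0 <= xb -> tends_minfty y1 s1 -> tends_minfty y2 s2 ->
  decreasing_y_near G1 x0 s1 ->
  s1 < n1 -> (forall y, s1 < y < n1 -> G1 x0 y < 0) ->
  c2 < n1 -> (forall y, c2 < y < s2 -> 0 < G2 x0 y) -> G2 x0 s2 = 0 ->
  forall t, y2 t <= y1 t.
Proof.
  intros Hx0 Hl1 Hl2 Hdec Hsn1 Hneg1 Hcn Hpos2 Hzero2 tau.
  apply Rnot_lt_le. intros Hlt.
  assert (Hgap : forall t, t <= tau -> y1 t < y2 t).
  { intros t Ht. apply Rnot_le_lt. intros Hle.
    specialize (comparison_principle t tau Ht Hle). lra. }
  assert (Hs12 : s1 <= s2)
    by (apply (le_of_tends_minfty y1 y2 s1 s2 tau); auto; intros t Ht; left; auto).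
  assert (Hs : s2 = s1)
    by exact (saddle_values_eq (G1 x0) (G2 x0) s1 n1 s2 c2 (fun y => G_le x0 y Hx0)
                Hs12 Hsn1 Hneg1 Hcn Hpos2 Hzero2).
  subst s2. exact (gap_not_pos_near_common_limit s1 tau Hdec Hl1 Hl2 Hgap).
Qed.

End Comparison.

Lemma unstable_branches_ordered (G1 G2 gy1 gy2 : R -> R -> R) (X dX y1 y2 : R -> R)
    (xa xb s1 n1 s2 n2 : R) :
  has_cont_dy G1 gy1 -> has_cont_dy G2 gy2 ->
  (forall x y, xa <= x <= xb -> G2 x y <= G1 x y) ->
  (forall t, xa <= X t <= xb) -> (forall t, is_derive X t (dX t)) -> (forall t, 0 <= dX t) ->
  (forall t, is_derive y1 t (G1 (X t) (y1 t))) -> (forall t, is_derive y2 t (G2 (X t) (y2 t))) ->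
  (forall px py, in_alpha_limit X y1 px py <-> px = xa /\ py = s1) ->
  (forall px py, in_alpha_limit X y2 px py <-> px = xa /\ py = s2) ->
  (forall y, G1 xa y = 0 <-> cong2pi y s1 \/ cong2pi y n1) ->
  (forall y, G2 xa y = 0 <-> cong2pi y s2 \/ cong2pi y n2) ->
  s1 < n1 <= s1 + 2 * PI -> s2 < n2 <= s2 + 2 * PI -> n2 - 2 * PI < n1 ->
  Derive (G1 xa) s1 < 0 -> Derive (G2 xa) s2 < 0 ->
  forall t, y2 t <= y1 t.
Proof.
  intros Hc1 Hc2 Hle Hstrip HdX HdX_nonneg Hy1 Hy2 Hal1 Hal2 Hz1 Hz2 Hsn1 Hsn2 Hnn Hgy1 Hgy2.
  rewrite (Derive_of_cont_dy _ _ _ _ Hc1) in Hgy1.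
  rewrite (Derive_of_cont_dy _ _ _ _ Hc2) in Hgy2.
  assert (Hcont : forall u du, (forall t, is_derive u t (du t)) -> continuity u)
    by (intros u du Hu t; exact (is_derive_continuity_pt _ _ _ (Hu t))).
  assert (Hmon : forall t1 t2, t1 <= t2 -> X t1 <= X t2)
    by (intros t1 t2 Ht; apply (nondecr_of_is_derive_nonneg X dX); auto).
  destruct (tends_minfty_of_alpha_limit X y1 xa s1 (Hcont _ _ Hy1) Hmon
    (fun t => proj1 (Hstrip t)) Hal1) as [HlX Hl1].
  destruct (tends_minfty_of_alpha_limit X y2 xa s2 (Hcont _ _ Hy2) Hmon
    (fun t => proj1 (Hstrip t)) Hal2) as [_ Hl2].
  apply (solutions_ordered_of_limits G1 G2 X y1 y2 xa xb (Hcont _ _ HdX) Hstrip Hle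
    (locally_lipschitz_y_of_cont_dy _ _ Hc1) Hy1 Hy2 xa HlX s1 n1 s2 (n2 - 2 * PI));
    [specialize (Hstrip 0); lra | exact Hl1 | exact Hl2
    | exact (decreasing_y_near_of_cont_dy _ _ _ _ Hc1 Hgy1) | lra | | exact Hnn |
    | apply Hz2; left; apply cong2pi_refl].
  - apply (neg_on_zero_free_right (G1 xa) (gy1 xa)); [apply Hc1 | | exact Hgy1 |].
    + apply Hz1. left. apply cong2pi_refl.
    + intros y Hy Hzero. apply Hz1 in Hzero.
      exact (not_cong2pi_between s1 n1 y Hsn1 (or_introl Hy) Hzero).
  - apply (pos_on_zero_free_left (G2 xa) (gy2 xa)); [apply Hc2 | | exact Hgy2 |].
    + apply Hz2. left. apply cong2pi_refl.
    + intros y Hy Hzero. apply Hz2 in Hzero.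
      exact (not_cong2pi_between s2 n2 y Hsn2 (or_intror Hy) Hzero).
Qed.

Lemma stable_branches_ordered (G1 G2 gy1 gy2 : R -> R -> R) (X dX y1 y2 : R -> R)
    (xa xb s1 n1 s2 n2 : R) :
  has_cont_dy G1 gy1 -> has_cont_dy G2 gy2 ->
  (forall x y, xa <= x <= xb -> G2 x y <= G1 x y) ->
  (forall t, xa <= X t <= xb) -> (forall t, is_derive X t (dX t)) -> (forall t, 0 <= dX t) ->
  (forall t, is_derive y1 t (G1 (X t) (y1 t))) -> (forall t, is_derive y2 t (G2 (X t) (y2 t))) ->
  (forall px py, in_omega_limit X y1 px py <-> px = xb /\ py = s1) ->
  (forall px py, in_omega_limit X y2 px py <-> px = xb /\ py = s2) ->
  (forall y, G1 xb y = 0 <-> cong2pi y s1 \/ cong2pi y n1) ->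
  (forall y, G2 xb y = 0 <-> cong2pi y s2 \/ cong2pi y n2) ->
  s1 < n1 < s1 + 2 * PI -> s2 < n2 < s2 + 2 * PI -> n1 - n2 < 2 * PI ->
  0 < Derive (G1 xb) s1 -> 0 < Derive (G2 xb) s2 ->
  forall t, y1 t <= y2 t.
Proof.
  intros Hc1 Hc2 Hle Hstrip HdX HdX_nonneg Hy1 Hy2 Hom1 Hom2 Hz1 Hz2 Hsn1 Hsn2 Hnn Hgy1 Hgy2 t.
  assert (Hzeros : forall (G : R -> R -> R) s n,
    (forall y, G xb y = 0 <-> cong2pi y s \/ cong2pi y n) ->
    forall y, G (- - xb) (- y) = 0 <-> cong2pi y (- s) \/ cong2pi y (- n + 2 * PI)).
  { intros G s n Hz y. rewrite Ropp_involutive, Hz, !cong2pi_opp, cong2pi_add_2PI. tauto. }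
  assert (Hsol : forall (G : R -> R -> R) y, (forall t, is_derive y t (G (X t) (y t))) ->
    forall t, is_derive (fun t => - y (- t)) t
      ((fun x y => G (- x) (- y)) (- X (- t)) (- y (- t)))).
  { intros G y Hy s. cbv beta. rewrite !Ropp_involutive. apply is_derive_reflect, Hy. }
  enough (Hrefl : - y2 (- - t) <= - y1 (- - t)) by (rewrite Ropp_involutive in Hrefl; lra).
  apply (unstable_branches_ordered (fun x y => G1 (- x) (- y)) (fun x y => G2 (- x) (- y))
    (fun x y => - gy1 (- x) (- y)) (fun x y => - gy2 (- x) (- y)) (fun t => - X (- t))
    (fun t => dX (- t)) (fun t => - y1 (- t)) (fun t => - y2 (- t))
    (- xb) (- xa) (- s1) (- n1 + 2 * PI) (- s2) (- n2 + 2 * PI));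
    try (apply has_cont_dy_reflect; assumption); try (apply Hsol; assumption);
    try (apply in_alpha_limit_reflect; assumption); try (apply Hzeros; assumption); try lra.
  - intros x y Hx. apply Hle. lra.
  - intro s. specialize (Hstrip (- s)). lra.
  - intro s. apply is_derive_reflect, HdX.
  - intro s. apply HdX_nonneg.
  - rewrite (Derive_of_cont_dy _ _ _ _ (has_cont_dy_reflect _ _ Hc1)), !Ropp_involutive.
    rewrite (Derive_of_cont_dy _ _ _ _ Hc1) in Hgy1. lra.
  - rewrite (Derive_of_cont_dy _ _ _ _ (has_cont_dy_reflect _ _ Hc2)), !Ropp_involutive.
    rewrite (Derive_of_cont_dy _ _ _ _ Hc2) in Hgy2. lra.
Qed.

Lemma Derive_periodic (h : R -> R) p z :
  (forall z, h (z + p) = h z) -> ex_derive h (z + p) -> Derive h (z + p) = Derive h z.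
Proof.
  intros Hper Hd.
  rewrite <- (Derive_ext (fun z => h (z + p)) h z Hper).
  rewrite (Derive_comp h (fun z => z + p) z Hd ltac:(auto_derive; exact I)).
  rewrite Derive_plus, Derive_id, Derive_const; [ring | apply ex_derive_id | apply ex_derive_const].
Qed.

Lemma lt_add_2PI_of_slopes (h : R -> R) s n :
  (forall z, h (z + 2 * PI) = h z) -> (forall z, ex_derive h z) ->
  - PI <= s -> n <= PI -> 0 < Derive h s -> Derive h n < 0 -> n < s + 2 * PI.
Proof.
  intros Hper Hd Hs Hn Hds Hdn. apply Rnot_le_lt. intros Hle.
  assert (Hn2 : n = s + 2 * PI) by lra. subst n.
  rewrite Derive_periodic in Hdn by auto. lra.
Qed.

Lemma inI_between a b m1 m2 m : inI a b m1 -> inI a b m2 -> m1 <= m <= m2 -> inI a b m.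
Proof.
  intros [Ha1 _] [_ Hb2] Hm. split.
  - apply (Rbar_lt_le_trans a m1 m); [exact Ha1 | simpl; lra].
  - apply (Rbar_le_lt_trans m m2 b); [simpl; lra | exact Hb2].
Qed.

Theorem lemma1
  (xm xp : R) (f : R -> R) (G : R -> R -> R -> R)
  (a b : Rbar) (sm nm sp np : R -> R)
  (Hab : Rbar_lt a b)
  (Hx : xm < xp)
  (Hf : smooth1 f)
  (HGs : forall mu : R, inI a b mu -> smooth2 (G mu))
  (HGmu : exists Gmu : R -> R -> R -> R,
      forall (mu x y : R), inI a b mu ->
        is_derive (fun m => G m x y) mu (Gmu mu x y) /\
        continuous (fun m => Gmu m x y) mu)
  (Hper : forall mu x y, G mu x (y + 2 * PI) = G mu x y)
  (Hfm : f xm = 0) (Hfp : f xp = 0)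
  (Hfpos : forall x, xm < x < xp -> 0 < f x)
  (Hf'm : 0 <= Derive f xm) (Hf'p : Derive f xp <= 0)
  (Hzm : forall (mu y : R), inI a b mu ->
      (G mu xm y = 0 <-> cong2pi y (sm mu) \/ cong2pi y (nm mu)))
  (Hzp : forall (mu y : R), inI a b mu ->
      (G mu xp y = 0 <-> cong2pi y (sp mu) \/ cong2pi y (np mu)))
  (Hordm : forall mu : R, inI a b mu -> - PI <= sm mu < nm mu /\ nm mu <= PI)
  (Hordp : forall mu : R, inI a b mu -> - PI <= sp mu < np mu /\ np mu <= PI)
  (Hdnm : forall mu : R, inI a b mu -> 0 < Derive (G mu xm) (nm mu))
  (Hdsm : forall mu : R, inI a b mu -> Derive (G mu xm) (sm mu) < 0)
  (Hdnp : forall mu : R, inI a b mu -> Derive (G mu xp) (np mu) < 0)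
  (Hdsp : forall mu : R, inI a b mu -> 0 < Derive (G mu xp) (sp mu))
  (Hcong : forall mu : R, inI a b mu ->
      cong2pi (sm mu - nm mu) (np mu - sp mu))
  (Hnw : forall (mu px py : R), inI a b mu ->
      xm <= px <= xp -> nonwandering xm xp f (G mu) px py ->
      (px = xm /\ (cong2pi py (sm mu) \/ cong2pi py (nm mu))) \/
      (px = xp /\ (cong2pi py (sp mu) \/ cong2pi py (np mu))))
  (HM : forall (mu x y : R), inI a b mu -> xm <= x <= xp ->
      Derive (fun m => G m x y) mu <= 0)
  (X : R -> R)
  (HX : forall t, xm < X t < xp /\ is_derive X t (f (X t)))
  (mu1 mu2 : R)
  (Hmu1 : inI a b mu1) (Hmu2 : inI a b mu2) (Hlt : mu1 < mu2)
  (ym1 ym2 yp1 yp2 : R -> R)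
  (Hym1 : is_sol xm xp f (G mu1) X ym1 /\
          forall px py, in_alpha_limit X ym1 px py <-> (px = xm /\ py = sm mu1))
  (Hym2 : is_sol xm xp f (G mu2) X ym2 /\
          forall px py, in_alpha_limit X ym2 px py <-> (px = xm /\ py = sm mu2))
  (Hyp1 : is_sol xm xp f (G mu1) X yp1 /\
          forall px py, in_omega_limit X yp1 px py <-> (px = xp /\ py = sp mu1))
  (Hyp2 : is_sol xm xp f (G mu2) X yp2 /\
          forall px py, in_omega_limit X yp2 px py <-> (px = xp /\ py = sp mu2)) :
  forall tau : R, ym2 tau <= ym1 tau /\ yp1 tau <= yp2 tau.
Proof.
  intros tau. assert (HPI := PI_RGT_0).
  destruct (has_cont_dy_of_smooth2 _ (HGs mu1 Hmu1)) as [gy1 Hgy1].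
  destruct (has_cont_dy_of_smooth2 _ (HGs mu2 Hmu2)) as [gy2 Hgy2].
  assert (HGle : forall x y, xm <= x <= xp -> G mu2 x y <= G mu1 x y).
  { intros x y Hxr. destruct HGmu as [Gmu HGm].
    apply (nonincr_of_is_derive_nonpos (fun m => G m x y)
      (fun m => Derive (fun m => G m x y) m)); [lra | |]; intros m Hm;
      assert (HmI := inI_between a b mu1 mu2 m Hmu1 Hmu2 Hm).
    - apply Derive_correct. exists (Gmu m x y). apply HGm, HmI.
    - exact (HM m x y HmI Hxr). }
  assert (HXstrip : forall t, xm <= X t <= xp) by (intro t; specialize (HX t); lra).
  assert (HXincr : forall t, 0 <= f (X t)) by (intro t; left; apply Hfpos, HX).
  assert (Hnp : forall mu gy, inI a b mu -> has_cont_dy (G mu) gy -> np mu < sp mu + 2 * PI).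
  { intros mu gy Hmu [Hgy _]. destruct (Hordp mu Hmu).
    apply (lt_add_2PI_of_slopes (G mu xp)); auto; [intro z; exists (gy xp z); apply Hgy | lra]. }
  pose proof (Hnp mu1 gy1 Hmu1 Hgy1). pose proof (Hnp mu2 gy2 Hmu2 Hgy2).
  destruct (Hordm mu1 Hmu1), (Hordm mu2 Hmu2), (Hordp mu1 Hmu1), (Hordp mu2 Hmu2).
  split.
  - apply (unstable_branches_ordered (G mu1) (G mu2) gy1 gy2 X (fun t => f (X t)) ym1 ym2
      xm xp (sm mu1) (nm mu1) (sm mu2) (nm mu2)); try apply HX;
      try apply Hym1; try apply Hym2; try (intro; apply Hzm); auto; lra.
  - apply (stable_branches_ordered (G mu1) (G mu2) gy1 gy2 X (fun t => f (X t)) yp1 yp2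
      xm xp (sp mu1) (np mu1) (sp mu2) (np mu2)); try apply HX;
      try apply Hyp1; try apply Hyp2; try (intro; apply Hzp); auto; lra.
Qed.
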